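(* Let $\mathcal{X}=\mathcal{Y}=\mathbb{R}$ and let $\ell^{\mathrm{obj}}(y,y')=\ell^{\mathrm{con}}(y,y')=(y-y')^2$. Let $\ell^{\mathrm{a}}:\mathbb{R}\times\mathbb{R}\to\mathbb{R}$ be a p-distance function, i.e. $\ell^{\mathrm{a}}(y,y')\ge 0$ for all $y,y'$, and $\ell^{\mathrm{a}}(y,y')=0$ if and only if $y=y'$. Let $Q$ and $P$ be absolutely continuous probability measures on $\mathbb{R}$ with $\operatorname{supp}(Q)=[a,b]$ and $\operatorname{supp}(P)=[c,d]$, where $a<b\le c<d$. Let $F$ and $H$ be $L$-Lipschitz function spaces (classes of $L$-Lipschitz functions $\mathbb{R}\to\mathbb{R}$), and let $G=\{g:\mathbb{R}\to\mathbb{R}\}$ be the set of all functions. Let $\varepsilon\ge 0$ and $f\in F$. Consider the expected BODAME problem $$\max_{g\in G}\ \mathbb{E}_{X\sim Q}\big[\ell^{\mathrm{obj}}(f(X),h_g(X))\big]$$ subject to $h_g=\operatorname{argmin}_{h\in H}\mathbb{E}_{X\sim P}[\ell^{\mathrm{a}}(g(X),h(X))]$ and $\mathbb{E}_{X\sim Q}[\ell^{\mathrm{con}}(f(X),g(X))]\le\varepsilon$. Then the optimal value of this problem is $\infty$.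
   Context: In this problem a defender with true model $f$ publishes a surrogate model $g$, which must approximate $f$ up to $\varepsilon$ on the defender's distribution $Q$; an attacker fits a model $h_g\in H$ to the outputs of $g$ by minimizing the expected loss $\ell^{\mathrm{a}}$ on the attacker's distribution $P$; the defender maximizes the expected discrepancy between $f$ and $h_g$ on $Q$. ''Optimal value is $\infty$'' means the supremum of the objective over feasible $g$ is $+\infty$. *)

From HB Require Import structures.
From mathcomp Require Import all_boot all_order all_algebra.
From mathcomp Require Import all_classical all_reals all_analysis.
Set Implicit Arguments. Unset Strict Implicit. Unset Printing Implicit Defensive.
Import Order.TTheory GRing.Theory Num.Theory numFieldNormedType.Exports.
Local Open Scope classical_set_scope.
Local Open Scope ring_scope.

(* Topological support of a measure on R: the points all of whose open
   neighbourhoods have positive measure (= the smallest closed set of full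
   measure). *)
Definition msupport (R : realType) (mu : set R -> \bar R) : set R :=
  [set x | forall U : set R, open U -> U x -> (0 < mu U)%E].

Definition lipschitz_with (R : realType) (L : R) (h : R -> R) : Prop :=
  forall x y : R, `|h x - h y| <= L * `|x - y|.

Definition p_distance (R : realType) (l : R -> R -> R) : Prop :=
  (forall y y' : R, 0 <= l y y') /\ (forall y y' : R, l y y' = 0 <-> y = y').

Definition expected_loss (R : realType) (mu : set R -> \bar R)
  (loss : R -> R -> R) (u v : R -> R) : \bar R :=
  (\int[mu]_x (loss (u x) (v x))%:E)%E.

Definition sqloss (R : realType) (y y' : R) : R := (y - y') ^+ 2.

Definition attacker_best (R : realType) (P : set R -> \bar R) (la : R -> R -> R)
  (L : R) (g h : R -> R) : Prop :=
  lipschitz_with L h /\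
  forall h' : R -> R, lipschitz_with L h' ->
    (expected_loss P la g h <= expected_loss P la g h')%E.

From HB Require Import structures.
From mathcomp Require Import all_boot all_order all_algebra.
From mathcomp Require Import all_classical all_reals all_analysis.
From mathcomp Require Import measurable_realfun lra.
Import Order.TTheory GRing.Theory Num.Theory numFieldNormedType.Exports.
Local Open Scope classical_set_scope.
Local Open Scope ring_scope.

(* Since Q lives on [a, b] and P on [c, d] with b <= c, the defender may
   publish g = f on (-oo, c) and an arbitrary constant K on [c, +oo): g agrees
   with f Q-almost everywhere, so the constraint holds with zero loss.  The
   constant K has zero attacker loss, so every optimal attacker h equals K
   P-almost everywhere; as c lies in the support of P, h takes the value K
   within distance 1 of c.  Being L-Lipschitz, h then stays above
   K - L (c - a + 1) on [a, b], while f stays below f a + L (b - a), so for K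
   large the loss (f - h)^2 exceeds any prescribed bound Q-almost everywhere. *)

Lemma exists_nat_bracket {R : realType} (y : R) : 0 < y ->
  exists n : nat, n.+1%:R^-1 <= y <= n.+1%:R.
Proof.
move=> y0; exists (Num.trunc y^-1 + Num.trunc y)%N; apply/andP; split.
- rewrite invf_ple ?posrE ?ltr0n //; apply: le_trans (ltW (truncnS_gt _)) _.
  by rewrite ler_nat ltnS leq_addr.
- apply: le_trans (ltW (truncnS_gt _)) _.
  by rewrite ler_nat ltnS leq_addl.
Qed.

Section measure_support.
Context {R : realType} (mu : {measure set R -> \bar R}).

Lemma msupportN_nbhs0 {x : R} :
  ~ msupport mu x -> exists U, [/\ open U, U x & mu U = 0%E].
Proof.
move=> xNsupp; apply: contrapT => noU; apply: xNsupp => U oU Ux.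
rewrite lt0e measure_ge0 andbT; apply/eqP => U0.
by apply: noU; exists U.
Qed.

Lemma compact_outside_msupport0 (K : set R) :
  compact K -> (forall x, K x -> ~ msupport mu x) -> mu K = 0%E.
Proof.
move=> cK KNsupp.
have [U UP] : {U : R -> set R &
    forall x, K x -> [/\ open (U x), U x x & mu (U x) = 0%E]}.
  apply: (choice (P := fun x V => K x -> [/\ open V, V x & mu V = 0%E])) => x.
  have [Kx|NKx] := pselect (K x); last by exists set0.
  by have [V ?] := msupportN_nbhs0 (KNsupp x Kx); exists V.
have oU x : K x -> open (U x) by case/UP.
move: (cK); rewrite compact_cover => /(_ R K U oU).
case=> [x Kx|D DK KD]; first by exists x => //; have [] := UP x Kx.
apply/eqP; rewrite eq_le measure_ge0 andbT.
have mK := compact_measurable cK.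
apply: le_trans (content_sub_fsum mu (finite_fset D) _ mK KD) _.
- by move=> x /DK; rewrite inE => /oU /open_measurable.
by rewrite fsbig1 // => x /DK; rewrite inE => /UP[].
Qed.

Lemma sigma_compact_outside_msupport0 (A : set R) (K : nat -> set R) :
  measurable A -> A `<=` \bigcup_n K n -> (forall n, compact (K n)) ->
  (forall n x, K n x -> ~ msupport mu x) -> mu A = 0%E.
Proof.
move=> mA AK cK KNsupp; apply/eqP; rewrite eq_le measure_ge0 andbT.
have mK n : measurable (K n) := compact_measurable (cK n).
apply: le_trans (measure_sigma_subadditive _ mK mA AK) _.
by rewrite eseries0 // => n _ _; exact: compact_outside_msupport0 (cK n) (KNsupp n).
Qed.

Lemma ae_ge_msupport {a : R} :
  msupport mu `<=` [set x | a <= x] -> {ae mu, forall x, a <= x}.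
Proof.
move=> supp_ge; exists [set` `]-oo, a[]; split; first exact: measurable_itv.
- apply: (@sigma_compact_outside_msupport0 _
    (fun n => [set` `[a - n.+1%:R, a - n.+1%:R^-1]])) => //.
  + move=> x /=; rewrite in_itv /= => xa.
    have /exists_nat_bracket[n /andP[n1 n2]] : 0 < a - x by rewrite subr_gt0.
    exists n => //=; rewrite in_itv /=; apply/andP; split.
      by rewrite lerBlDr -lerBlDl.
    by rewrite lerBrDr -lerBrDl.
  + by move=> n; exact: segment_compact.
  + move=> n x /=; rewrite in_itv /= => /andP[_ xa] /supp_ge /=.
    by apply/negP; rewrite -ltNge (le_lt_trans xa) // gtrBl invr_gt0 ltr0n.
- by move=> x /= /negP; rewrite in_itv /= ltNge.
Qed.

Lemma ae_le_msupport {b : R} :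
  msupport mu `<=` [set x | x <= b] -> {ae mu, forall x, x <= b}.
Proof.
move=> supp_le; exists [set` `]b, +oo[]; split; first exact: measurable_itv.
- apply: (@sigma_compact_outside_msupport0 _
    (fun n => [set` `[b + n.+1%:R^-1, b + n.+1%:R]])) => //.
  + move=> x /=; rewrite in_itv /= andbT => bx.
    have /exists_nat_bracket[n /andP[n1 n2]] : 0 < x - b by rewrite subr_gt0.
    exists n => //=; rewrite in_itv /=; apply/andP; split.
      by rewrite -lerBrDl.
    by rewrite -lerBlDl.
  + by move=> n; exact: segment_compact.
  + move=> n x /=; rewrite in_itv /= => /andP[bx _] /supp_le /=.
    by apply/negP; rewrite -ltNge (lt_le_trans _ bx) // ltrDl invr_gt0 ltr0n.
- by move=> x /= /negP; rewrite in_itv /= andbT ltNge.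
Qed.

Lemma ae_in_msupport_itv {a b : R} :
  msupport mu `<=` [set` `[a, b]] -> {ae mu, forall x, a <= x <= b}.
Proof.
move=> supp_ab.
have supp_ge : msupport mu `<=` [set x | a <= x].
  by move=> x /supp_ab /=; rewrite in_itv /= => /andP[].
have supp_le : msupport mu `<=` [set x | x <= b].
  by move=> x /supp_ab /=; rewrite in_itv /= => /andP[].
apply: filterS2 (ae_ge_msupport supp_ge) (ae_le_msupport supp_le) => x xa xb.
by apply/andP.
Qed.

Lemma msupport_ae_exists {x : R} {U : set R} {p : R -> Prop} :
  msupport mu x -> open U -> U x -> {ae mu, forall y, p y} ->
  exists2 y, U y & p y.
Proof.
move=> xsupp oU Ux [N [mN N0 Np]]; apply: contrapT => noy.
have : (0 < mu U)%E by exact: xsupp.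
suff -> : mu U = 0%E by rewrite ltxx.
apply/eqP; rewrite eq_le measure_ge0 andbT -N0 le_measure ?inE //.
- exact: open_measurable.
- by move=> y Uy; apply: Np => py; apply: noy; exists y.
Qed.

Lemma ae_neq_abs_continuous (b : R) :
  mu `<< (@lebesgue_measure R) -> {ae mu, forall x, x != b}.
Proof.
move=> mu_ac; exists [set b]; split; first exact: measurable_set1.
- apply/(measure0_null_setP mu (measurable_set1 b))/mu_ac.
  apply/(measure0_null_setP lebesgue_measure (measurable_set1 b)).
  exact: lebesgue_measure_set1.
- by move=> x /= /negP; rewrite negbK => /eqP.
Qed.
End measure_support.

Section lipschitz.
Context {R : realType} {L : R}.
Hypothesis L0 : 0 <= L.

Lemma lipschitz_with_continuous {h : R -> R} :
  lipschitz_with L h -> continuous h.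
Proof.
move=> hL x; apply/cvgrPdist_lt => e e0.
have L1 : 0 < L + 1 by rewrite ltr_wpDl.
near=> y.
have xy : `|x - y| < e / (L + 1).
  by near: y; apply: cvgr_dist_lt => //; rewrite divr_gt0.
apply: le_lt_trans (hL x y) _.
apply: le_lt_trans (_ : L * `|x - y| <= (L + 1) * `|x - y|) _.
  by rewrite ler_wpM2r // lerDl.
by rewrite mulrC -ltr_pdivlMr.
Unshelve. all: by end_near.
Qed.

Lemma lipschitz_with_measurable {h : R -> R} :
  lipschitz_with L h -> measurable_fun setT h.
Proof. by move=> /lipschitz_with_continuous /continuous_measurable_fun. Qed.

Lemma lipschitz_with_cst (k : R) : lipschitz_with L (cst k).
Proof. by move=> x y; rewrite subrr normr0 mulr_ge0. Qed.

End lipschitz.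

Section expected_loss.
Context {R : realType} {loss : R -> R -> R}.
Hypothesis mloss : measurable_fun setT (fun p : R * R => loss p.1 p.2).
Hypothesis loss_ge0 : forall y y', 0 <= loss y y'.
Context {u v : R -> R}.
Hypotheses (mfu : measurable_fun setT u) (mfv : measurable_fun setT v).

Lemma measurable_loss : measurable_fun setT (fun x => (loss (u x) (v x))%:E).
Proof.
apply/measurable_EFinP.
exact: measurableT_comp mloss (measurable_fun_pair mfu mfv).
Qed.

Lemma expected_loss_ge0 (mu : {measure set R -> \bar R}) :
  (0 <= expected_loss mu loss u v)%E.
Proof. by apply: integral_ge0 => x _; rewrite lee_fin. Qed.

Lemma expected_loss_ae_eq0 (mu : {measure set R -> \bar R}) :
  (forall y, loss y y = 0) -> {ae mu, forall x, u x = v x} ->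
  expected_loss mu loss u v = 0%E.
Proof.
move=> loss_diag uv; rewrite /expected_loss (ae_eq_integral (cst 0%E)) //.
- exact: integral0.
- exact: measurable_loss.
- by apply: filterS uv => x uvx _; rewrite uvx loss_diag.
Qed.

Lemma expected_loss_eq0_ae (mu : {measure set R -> \bar R}) :
  (forall y y', loss y y' = 0 -> y = y') ->
  expected_loss mu loss u v = 0%E -> {ae mu, forall x, u x = v x}.
Proof.
move=> loss_sep E0.
have : (\int[mu]_x `|(loss (u x) (v x))%:E| = 0)%E.
  by under eq_integral do rewrite gee0_abs ?lee_fin //.
move/(ae_eq_integral_abs mu measurableT measurable_loss).
by apply: filterS => x /(_ I) [/loss_sep].
Qed.

Lemma expected_loss_ge_ae (mu : probability R R) (r : R) : 0 <= r ->
  {ae mu, forall x, r <= loss (u x) (v x)} ->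
  (r%:E <= expected_loss mu loss u v)%E.
Proof.
move=> r0 ae_r.
have -> : r%:E = (\int[mu]_x (cst r%:E) x)%E.
  rewrite integral_cst // -[LHS]mule1; congr (_ * _)%E.
  exact/esym/probability_setT.
apply: ae_ge0_le_integral => //.
- by move=> x _; rewrite lee_fin.
- exact: measurable_loss.
- by apply: filterS ae_r => x rx _; rewrite lee_fin.
Qed.

End expected_loss.

Lemma measurable_sqloss (R : realType) :
  measurable_fun setT (fun p : R * R => sqloss p.1 p.2).
Proof. by apply: measurable_funX; apply: measurable_funB. Qed.

Lemma sqloss_ge0 (R : realType) (y y' : R) : 0 <= sqloss y y'.
Proof. exact: sqr_ge0. Qed.

Definition poisoned {R : realType} (c : R) (f : R -> R) (K : R) (x : R) : R :=
  if x < c then f x else K.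

Section poisoning.
Context {R : realType} {la : R -> R -> R} {Q P : probability R R}.
Context {a b c L : R} {f : R -> R}.
Hypotheses (la_pd : p_distance la)
  (mla : measurable_fun setT (fun p : R * R => la p.1 p.2)).
Hypotheses (L0 : 0 <= L) (fL : lipschitz_with L f).
Hypotheses (Q_ab : {ae Q, forall x, a <= x <= b})
  (Q_lt_c : {ae Q, forall x, x < c}).
Hypotheses (P_ge_c : {ae P, forall x, c <= x}) (P_supp_c : msupport P c).

Lemma measurable_poisoned (K : R) : measurable_fun setT (poisoned c f K).
Proof.
apply: measurable_fun_ifT => //; last exact: lipschitz_with_measurable fL.
exact (measurable_fun_ltr (@measurable_id _ _ setT) (measurable_cst c)).
Qed.

Lemma poisoned_feasible (K : R) :
  expected_loss Q (@sqloss R) f (poisoned c f K) = 0%E.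
Proof.
apply: expected_loss_ae_eq0 => //.
- exact: measurable_sqloss.
- exact: lipschitz_with_measurable fL.
- exact: measurable_poisoned.
- by move=> y; rewrite /sqloss subrr expr0n.
- by apply: filterS Q_lt_c => x xc; rewrite /poisoned xc.
Qed.

Lemma poisoned_eq_cst_ae (K : R) : {ae P, forall x, poisoned c f K x = K}.
Proof. by apply: filterS P_ge_c => x cx; rewrite /poisoned ltNge cx. Qed.

Lemma expected_loss_poisoned_cst (K : R) :
  expected_loss P la (poisoned c f K) (cst K) = 0%E.
Proof.
apply: expected_loss_ae_eq0 (poisoned_eq_cst_ae K) => //.
- exact: measurable_poisoned.
- by move=> y; apply/la_pd.2.
Qed.

Lemma attacker_best_poisoned_cst (K : R) :
  attacker_best P la L (poisoned c f K) (cst K).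
Proof.
split; first exact: lipschitz_with_cst.
by move=> h _; rewrite expected_loss_poisoned_cst expected_loss_ge0 //; case: la_pd.
Qed.

Lemma attacker_best_poisoned_hits {K : R} {h : R -> R} :
  attacker_best P la L (poisoned c f K) h -> exists2 y, `|c - y| < 1 & h y = K.
Proof.
move=> [hL h_best].
have E0 : expected_loss P la (poisoned c f K) h = 0%E.
  apply/eqP; rewrite eq_le expected_loss_ge0 ?andbT; last by case: la_pd.
  by rewrite -(expected_loss_poisoned_cst K); apply/h_best/lipschitz_with_cst.
have h_ae : {ae P, forall x, poisoned c f K x = h x}.
  apply: expected_loss_eq0_ae E0 => //; first exact: la_pd.1.
  - exact: measurable_poisoned.
  - exact: lipschitz_with_measurable hL.
  - by move=> y y' /la_pd.2.
have [y cy hy] : exists2 y, ball c 1 y & h y = K.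
  apply: (msupport_ae_exists P P_supp_c (ball_open c 1) (ballxx c ltr01)).
  by apply: filterS2 h_ae (poisoned_eq_cst_ae K) => x <-.
by exists y.
Qed.

Lemma attacker_best_poisoned_far {K : R} {h : R -> R} :
  b <= c -> attacker_best P la L (poisoned c f K) h ->
  {ae Q, forall x, K - (f a + L * (b - a) + L * (c - a + 1)) <= h x - f x}.
Proof.
move=> bc h_best; have [y cy hy] := attacker_best_poisoned_hits h_best.
have [hL _] := h_best.
apply: filterS Q_ab => x /andP[ax xb].
have f_le : f x - f a <= L * (b - a).
  apply: le_trans (ler_normlW (fL x a)) _.
  by rewrite ler_wpM2l // ger0_norm ?subr_ge0 // lerD2r.
have h_le : K - h x <= L * (c - a + 1).
  rewrite -hy; apply: le_trans (ler_normlW (hL y x)) _; rewrite ler_wpM2l //.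
  have := ler_distD c y x; rewrite distrC in cy.
  rewrite (ger0_norm (x := c - x)) ?subr_ge0 ?(le_trans xb) //; lra.
lra.
Qed.
End poisoning.

Theorem theorem2 (R : realType) (la : R -> R -> R)
  (Q P : probability R R) (a b c d L eps : R) (f : R -> R) :
  p_distance la ->
  measurable_fun [set: R * R] (fun p : R * R => la p.1 p.2) ->
  Q `<< (@lebesgue_measure R) -> P `<< (@lebesgue_measure R) ->
  a < b -> b <= c -> c < d ->
  msupport Q = [set` `[a, b]] -> msupport P = [set` `[c, d]] ->
  0 <= L -> 0 <= eps -> lipschitz_with L f ->
  forall M : R,
    exists g : R -> R,
      (expected_loss Q (@sqloss R) f g <= eps%:E)%E /\
      (exists h : R -> R, attacker_best P la L g h) /\
      (forall h : R -> R, attacker_best P la L g h ->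
         (M%:E <= expected_loss Q (@sqloss R) f h)%E).
Proof.
move=> la_pd mla Q_ac _ _ bc cd sQ sP L0 eps0 fL M.
have Q_ab : {ae Q, forall x, a <= x <= b} by apply: ae_in_msupport_itv; rewrite sQ.
have Q_lt_c : {ae Q, forall x, x < c}.
  apply: filterS2 Q_ab (ae_neq_abs_continuous Q b Q_ac) => x /andP[_ xb] xNb.
  by apply: lt_le_trans bc; rewrite lt_neqAle xNb.
have P_cd : {ae P, forall x, c <= x <= d} by apply: ae_in_msupport_itv; rewrite sP.
have P_ge_c : {ae P, forall x, c <= x} by apply: filterS P_cd => x /andP[].
have P_supp_c : msupport P c by rewrite sP /= in_itv /= lexx ltW.
pose t : R := `|M| + 1.
pose K : R := t + (f a + L * (b - a) + L * (c - a + 1)).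
exists (poisoned c f K); split; last split.
- by rewrite (poisoned_feasible L0 fL Q_lt_c) lee_fin.
- by exists (cst K); exact: attacker_best_poisoned_cst.
move=> h h_best; have t0 : 0 <= t by rewrite addr_ge0.
have far :=
  attacker_best_poisoned_far la_pd mla L0 fL Q_ab P_ge_c P_supp_c bc h_best.
have mh := lipschitz_with_measurable L0 (proj1 h_best).
apply: le_trans (expected_loss_ge_ae (measurable_sqloss R) (@sqloss_ge0 R)
  (lipschitz_with_measurable L0 fL) mh Q _ (sqr_ge0 t) _).
- by rewrite lee_fin /t; have := ler_norm M; nra.
- apply: filterS far => x; rewrite /K addrK /sqloss; nra.
Qed.
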